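(* Let $\lambda>0$, $\beta\ge\alpha>1$ and $\gamma\ge\alpha/\beta$. Then $$\sum_{i\in\mathbb{N}}\frac{i^{-\alpha}}{(i^{-\beta}+\lambda)^\gamma}\le\lambda^{-\frac{1+\beta\gamma-\alpha}{\beta}}\,2^{1-\frac{\alpha}{\beta}}\int_0^\infty\frac{1}{1+y^\alpha}\,dy.$$ *)

From Stdlib Require Import Reals.
From Coquelicot Require Import Coquelicot.
Open Scope R_scope.

Definition lemma3_term (alpha beta gamma lambda x : R) : R :=
  Rpower x (- alpha) / Rpower (Rpower x (- beta) + lambda) gamma.

Definition lemma3_integrand (alpha y : R) : R := / (1 + Rpower y alpha).

From Stdlib Require Import Reals Lra Classical.
From Coquelicot Require Import Coquelicot.
Open Scope R_scope.

(* With p = alpha / beta <= 1, the concavity inequality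
   1 + s^p <= 2^(1-p) (1 + s)^p at s = lambda x^beta, together with
   (x^-beta + lambda)^(p - gamma) <= lambda^(p - gamma) (as gamma >= p), bounds the
   summand at x by C c h(c x), where h(y) = 1 / (1 + y^alpha), c = lambda^(1/beta) and
   C is the constant of the statement.  Since h decreases, the sum of the C c h(c i) is
   dominated by C times the integral of h over (0, oo), which converges as alpha > 1. *)

Lemma Rpower_gt_0 (x y : R) : 0 < Rpower x y.
Proof. apply exp_pos. Qed.

Lemma Rpower_1_l (y : R) : Rpower 1 y = 1.
Proof. unfold Rpower; rewrite ln_1, Rmult_0_r; apply exp_0. Qed.

Lemma Rpower_le_bernoulli (x p : R) :
  0 < x -> 0 <= p <= 1 -> Rpower x p <= 1 + p * (x - 1).
Proof.
  intros Hx Hp.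
  assert (Ex : Rpower x p * Rpower x (1 - p) = x).
  { rewrite <- Rpower_plus, Rplus_minus; apply Rpower_1; lra. }
  assert (E1 : Rpower x p * Rpower x (- p) = 1).
  { rewrite <- Rpower_plus, Rplus_opp_r; apply Rpower_O; lra. }
  (* weighted AM-GM, from [1 + t <= exp t] at [t = (1 - p) ln x] and [t = - p ln x] *)
  assert (H1 : 1 + (1 - p) * ln x <= Rpower x (1 - p)) by apply exp_ineq1_le.
  assert (H2 : 1 + - p * ln x <= Rpower x (- p)) by apply exp_ineq1_le.
  pose proof (Rpower_gt_0 x p).
  assert (K1 := Rmult_le_compat_l (p * Rpower x p) _ _ ltac:(nra) H1).
  assert (K2 := Rmult_le_compat_l ((1 - p) * Rpower x p) _ _ ltac:(nra) H2).
  nra.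
Qed.

Lemma Rpower_concave_add_le (A B p : R) :
  0 < A -> 0 < B -> 0 <= p <= 1 ->
  Rpower A p + Rpower B p <= Rpower 2 (1 - p) * Rpower (A + B) p.
Proof.
  intros HA HB Hp.
  set (m := (A + B) / 2).
  assert (Hm : 0 < m) by (unfold m; lra).
  assert (Hsplit : forall C, 0 < C -> Rpower C p = Rpower (C / m) p * Rpower m p).
  { intros C HC; rewrite Rpower_mult_distr by (try apply Rdiv_lt_0_compat; lra).
    f_equal; field; lra. }
  assert (Hm2 : Rpower 2 (1 - p) * Rpower (A + B) p = 2 * Rpower m p).
  { replace (A + B) with (2 * m) by (unfold m; field).
    rewrite <- Rpower_mult_distr, <- Rmult_assoc, <- Rpower_plus by lra.
    replace (1 - p + p) with 1 by ring.
    rewrite Rpower_1 by lra; reflexivity. }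
  rewrite Hm2, (Hsplit A HA), (Hsplit B HB), <- Rmult_plus_distr_r.
  apply Rmult_le_compat_r; [left; apply Rpower_gt_0 |].
  pose proof (Rpower_le_bernoulli (A / m) p ltac:(apply Rdiv_lt_0_compat; lra) Hp).
  pose proof (Rpower_le_bernoulli (B / m) p ltac:(apply Rdiv_lt_0_compat; lra) Hp).
  assert (Hsum : A / m + B / m = 2) by (unfold m; field; lra).
  nra.
Qed.

Lemma Rle_Rpower_l_nonpos (a b c : R) : c <= 0 -> 0 < a <= b -> Rpower b c <= Rpower a c.
Proof.
  intros Hc Hab; replace c with (- - c) by ring.
  rewrite (Rpower_Ropp b (- c)), (Rpower_Ropp a (- c)).
  apply Rinv_le_contravar; [apply Rpower_gt_0 | apply Rle_Rpower_l; lra].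
Qed.

Lemma Rpower_root_mul (lambda x alpha beta : R) :
  0 < lambda -> 0 < x -> beta <> 0 ->
  Rpower (Rpower lambda (1 / beta) * x) alpha = Rpower (lambda * Rpower x beta) (alpha / beta).
Proof.
  intros Hl Hx Hb.
  rewrite <- !Rpower_mult_distr, !Rpower_mult by (try apply Rpower_gt_0; assumption).
  f_equal; [f_equal | f_equal]; field; exact Hb.
Qed.

Lemma Rpower_1_plus_factor (lambda x beta p : R) :
  0 < lambda -> 0 < x ->
  Rpower (1 + lambda * Rpower x beta) p
  = Rpower x (beta * p) * Rpower (Rpower x (- beta) + lambda) p.
Proof.
  intros Hl Hx.
  replace (1 + lambda * Rpower x beta) with (Rpower x beta * (Rpower x (- beta) + lambda)).
  - rewrite <- Rpower_mult_distr, Rpower_mult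
      by (try apply Rpower_gt_0; pose proof (Rpower_gt_0 x (- beta)); lra).
    reflexivity.
  - rewrite Rmult_plus_distr_l, <- Rpower_plus, Rplus_opp_r, Rpower_O by lra; ring.
Qed.

Lemma lemma3_term_le (lambda alpha beta gamma x : R) :
  0 < lambda -> 0 <= alpha <= beta -> 0 < beta -> alpha / beta <= gamma -> 0 < x ->
  lemma3_term alpha beta gamma lambda x <=
  Rpower lambda (- ((1 + beta * gamma - alpha) / beta)) * Rpower 2 (1 - alpha / beta)
  * Rpower lambda (1 / beta) * lemma3_integrand alpha (Rpower lambda (1 / beta) * x).
Proof.
  intros Hl Ha Hb Hg Hx.
  unfold lemma3_term, lemma3_integrand; rewrite Rpower_root_mul by lra.
  set (p := alpha / beta) in *.
  assert (Hp : 0 <= p <= 1).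
  { unfold p; split; [apply Rmult_le_pos; [lra | left; apply Rinv_0_lt_compat; lra] |].
    apply Rmult_le_reg_r with beta; [lra |]; field_simplify; lra. }
  assert (Hpb : beta * p = alpha) by (unfold p; field; lra).
  set (s := lambda * Rpower x beta).
  set (u := Rpower x (- beta) + lambda).
  assert (Hlam : Rpower lambda (- ((1 + beta * gamma - alpha) / beta)) * Rpower lambda (1 / beta)
                 = Rpower lambda (p - gamma)).
  { rewrite <- Rpower_plus; f_equal; unfold p; field; lra. }
  assert (Hconc : 1 + Rpower s p <= Rpower 2 (1 - p) * (Rpower x alpha * Rpower u p)).
  { unfold u; rewrite <- Hpb, <- Rpower_1_plus_factor by lra.
    rewrite <- (Rpower_1_l p) at 1.
    apply Rpower_concave_add_le; [lra | apply Rmult_lt_0_compat; [lra | apply Rpower_gt_0] | exact Hp]. }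
  assert (Hmono : Rpower u (p - gamma) <= Rpower lambda (p - gamma)).
  { apply Rle_Rpower_l_nonpos; [lra |].
    pose proof (Rpower_gt_0 x (- beta)); unfold u; lra. }
  set (D := 1 + Rpower s p) in *.
  assert (HD : 0 < D) by (unfold D; pose proof (Rpower_gt_0 s p); lra).
  apply Rmult_le_reg_r with D; [exact HD |].
  replace (Rpower lambda (- ((1 + beta * gamma - alpha) / beta)) * Rpower 2 (1 - p)
             * Rpower lambda (1 / beta) * / D * D)
    with (Rpower 2 (1 - p) * Rpower lambda (p - gamma)) by (rewrite <- Hlam; field; lra).
  unfold Rdiv; rewrite <- Rpower_Ropp.
  apply Rle_trans with
    (Rpower x (- alpha) * Rpower u (- gamma) * (Rpower 2 (1 - p) * (Rpower x alpha * Rpower u p))).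
  { apply Rmult_le_compat_l; [left; apply Rmult_lt_0_compat; apply Rpower_gt_0 | exact Hconc]. }
  replace (Rpower x (- alpha) * Rpower u (- gamma) * (Rpower 2 (1 - p) * (Rpower x alpha * Rpower u p)))
    with (Rpower 2 (1 - p) * (Rpower x (- alpha) * Rpower x alpha) * (Rpower u p * Rpower u (- gamma)))
    by ring.
  rewrite <- !Rpower_plus, Rplus_opp_l, Rpower_O, Rmult_1_r by lra.
  apply Rmult_le_compat_l; [left; apply Rpower_gt_0 | exact Hmono].
Qed.

Lemma is_derive_Rpower (r x : R) :
  0 < x -> is_derive (fun y => Rpower y r) x (r * Rpower x (r - 1)).
Proof. intros Hx; apply is_derive_Reals, derivable_pt_lim_power, Hx. Qed.

Lemma continuous_Rpower (r x : R) : 0 < x -> continuous (fun y => Rpower y r) x.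
Proof.
  intros Hx; apply (ex_derive_continuous (K := R_AbsRing) (V := R_NormedModule)).
  eexists; apply is_derive_Rpower, Hx.
Qed.

Lemma is_RInt_Rpower (r a b : R) :
  0 < a -> 0 < b -> r + 1 <> 0 ->
  is_RInt (fun y => Rpower y r) a b ((Rpower b (r + 1) - Rpower a (r + 1)) / (r + 1)).
Proof.
  intros Ha Hb Hr.
  assert (Hmin : 0 < Rmin a b) by (apply Rmin_glb_lt; assumption).
  replace ((Rpower b (r + 1) - Rpower a (r + 1)) / (r + 1))
    with (minus (Rpower b (r + 1) / (r + 1)) (Rpower a (r + 1) / (r + 1)))
    by (unfold minus, plus, opp; simpl; field; exact Hr).
  apply (is_RInt_derive (fun y => Rpower y (r + 1) / (r + 1))).
  - intros x Hx.
    replace (Rpower x r) with (/ (r + 1) * ((r + 1) * Rpower x (r + 1 - 1)))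
      by (replace (r + 1 - 1) with r by ring; field; exact Hr).
    apply (is_derive_ext (fun y => / (r + 1) * Rpower y (r + 1)));
      [intros; unfold Rdiv; apply Rmult_comm |].
    apply is_derive_scal, is_derive_Rpower; lra.
  - intros x Hx; apply continuous_Rpower; lra.
Qed.

Lemma RInt_ge_const (f : R -> R) (a b c : R) :
  a <= b -> ex_RInt f a b -> (forall x, a < x < b -> c <= f x) ->
  (b - a) * c <= RInt f a b.
Proof.
  intros Hab Hf Hc.
  replace ((b - a) * c) with (RInt (fun _ => c) a b)
    by (rewrite RInt_const; reflexivity).
  apply RInt_le; [exact Hab | apply ex_RInt_const | exact Hf | exact Hc].
Qed.

Lemma RInt_le_const (f : R -> R) (a b c : R) :
  a <= b -> ex_RInt f a b -> (forall x, a < x < b -> f x <= c) ->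
  RInt f a b <= (b - a) * c.
Proof.
  intros Hab Hf Hc.
  replace ((b - a) * c) with (RInt (fun _ => c) a b)
    by (rewrite RInt_const; reflexivity).
  apply RInt_le; [exact Hab | exact Hf | apply ex_RInt_const | exact Hc].
Qed.

Section PositiveHalfLine.

Variable f : R -> R.
Hypothesis f_ex_RInt : forall a b, 0 < a -> 0 < b -> ex_RInt f a b.
Hypothesis f_ge_0 : forall x, 0 < x -> 0 <= f x.

Lemma RInt_le_superinterval (a' a b b' : R) :
  0 < a' -> a' <= a -> a <= b -> b <= b' -> RInt f a b <= RInt f a' b'.
Proof.
  intros H1 H2 H3 H4.
  rewrite <- (RInt_Chasles f a' a b'), <- (RInt_Chasles f a b b')
    by (apply f_ex_RInt; lra).
  assert (0 <= RInt f a' a) by (apply RInt_ge_0; [lra | apply f_ex_RInt; lra | intros; apply f_ge_0; lra]).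
  assert (0 <= RInt f b b') by (apply RInt_ge_0; [lra | apply f_ex_RInt; lra | intros; apply f_ge_0; lra]).
  unfold plus; simpl; lra.
Qed.

Lemma is_RInt_gen_of_RInt_bounded (M : R) :
  (forall a b, 0 < a -> a <= b -> RInt f a b <= M) ->
  exists I, is_RInt_gen f (at_right 0) (Rbar_locally p_infty) I /\
            forall a b, 0 < a -> a <= b -> RInt f a b <= I.
Proof.
  intros HM.
  set (E := fun z => exists a b, 0 < a /\ a <= b /\ z = RInt f a b).
  assert (Ebound : bound E) by (exists M; intros z (a & b & Ha & Hab & ->); auto).
  assert (Ene : exists z, E z) by (exists (RInt f 1 1), 1, 1; repeat split; lra).
  destruct (completeness E Ebound Ene) as [I [Iub Ilub]].
  assert (HI : forall a b, 0 < a -> a <= b -> RInt f a b <= I)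
    by (intros a b Ha Hab; apply Iub; exists a, b; auto).
  exists I; split; [| exact HI].
  intros P [eps HP].
  assert (Happrox : exists a0 b0, 0 < a0 <= b0 /\ I - eps < RInt f a0 b0).
  { apply NNPP; intros Hn.
    assert (Hub : is_upper_bound E (I - eps)).
    { intros z (a & b & Ha & Hab & ->); apply Rnot_lt_le; intros Hlt.
      apply Hn; exists a, b; auto. }
    pose proof (Ilub _ Hub); pose proof (cond_pos eps); lra. }
  destruct Happrox as (a0 & b0 & Hab0 & Hclose).
  apply Filter_prod with (fun a => 0 < a <= a0) (fun b => b0 <= b).
  - exists (mkposreal a0 (proj1 Hab0)); intros y Hy Hy0; split; [exact Hy0 |].
    apply Rabs_lt_between in Hy; unfold minus, plus, opp in Hy; simpl in Hy; lra.
  - exists b0; intros; lra.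
  - intros a b Ha Hb; exists (RInt f a b); split.
    + apply (RInt_correct (V := R_CompleteNormedModule)), f_ex_RInt; lra.
    + apply HP; apply Rabs_lt_between.
      pose proof (HI a b (proj1 Ha) ltac:(lra)).
      pose proof (RInt_le_superinterval a a0 b0 b (proj1 Ha) (proj2 Ha) (proj2 Hab0) Hb).
      unfold minus, plus, opp; simpl; lra.
Qed.

Hypothesis f_decr : forall x y, 0 < x -> x <= y -> f y <= f x.

(* [f] may blow up at [0]: the first unit interval is only covered from [t] on. *)
Lemma sum_n_le_RInt (t : R) :
  0 < t <= 1 -> forall N, sum_n (fun n => f (INR (S n))) N <= t * f 1 + RInt f t (INR (S N)).
Proof.
  intros Ht N; induction N as [| N IH].
  - rewrite sum_O; simpl INR.
    assert ((1 - t) * f 1 <= RInt f t 1).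
    { apply RInt_ge_const; [lra | apply f_ex_RInt; lra | intros; apply f_decr; lra]. }
    lra.
  - rewrite sum_Sn; change (plus ?x ?y) with (x + y).
    set (n := INR (S N)) in *; set (n' := INR (S (S N))).
    assert (Hn : 0 < n) by apply lt_0_INR, Nat.lt_0_succ.
    assert (Hn' : n' = n + 1) by apply S_INR.
    rewrite <- (RInt_Chasles f t n n') by (apply f_ex_RInt; lra).
    change (plus ?x ?y) with (x + y).
    assert ((n' - n) * f n' <= RInt f n n').
    { apply RInt_ge_const; [lra | apply f_ex_RInt; lra | intros; apply f_decr; lra]. }
    rewrite Hn' in *; lra.
Qed.

Lemma sum_n_le_of_RInt_le (J : R) :
  (forall a b, 0 < a -> a <= b -> RInt f a b <= J) ->
  forall N, sum_n (fun n => f (INR (S n))) N <= J.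
Proof.
  intros HJ N; apply Rle_plus_epsilon; intros eps Heps.
  set (k := Rabs (f 1) + 1).
  assert (Hk : 0 < k) by (pose proof (Rabs_pos (f 1)); unfold k; lra).
  set (t := Rmin 1 (eps / k)).
  assert (Ht : 0 < t <= 1)
    by (split; [apply Rmin_glb_lt; [lra | apply Rdiv_lt_0_compat; lra] | apply Rmin_l]).
  assert (Htk : t * k <= eps).
  { apply Rle_trans with (eps / k * k); [apply Rmult_le_compat_r; [lra | apply Rmin_r] |].
    right; field; lra. }
  assert (Htf : t * f 1 <= eps) by (pose proof (Rle_abs (f 1)); unfold k in Htk; nra).
  pose proof (sum_n_le_RInt t Ht N).
  pose proof (HJ t (INR (S N)) (proj1 Ht) ltac:(rewrite S_INR; pose proof (pos_INR N); lra)).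
  lra.
Qed.

End PositiveHalfLine.

Lemma is_RInt_scal_comp_mul (f : R -> R) (k c a b : R) :
  ex_RInt f (c * a) (c * b) ->
  is_RInt (fun x => k * c * f (c * x)) a b (k * RInt f (c * a) (c * b)).
Proof.
  intros Hf.
  assert (H : is_RInt f (c * a + 0) (c * b + 0) (RInt f (c * a) (c * b)))
    by (rewrite !Rplus_0_r; apply (RInt_correct (V := R_CompleteNormedModule)), Hf).
  apply (is_RInt_scal _ _ _ k), is_RInt_comp_lin in H.
  eapply is_RInt_ext; [| exact H].
  intros x _; unfold scal; simpl; unfold mult; simpl; rewrite Rplus_0_r; ring.
Qed.

Lemma is_series_of_bounded_sum_n (a : nat -> R) (M : R) :
  (forall n, 0 <= a n) -> (forall N, sum_n a N <= M) -> exists s, is_series a s /\ s <= M.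
Proof.
  intros Ha HM.
  assert (Hincr : forall n, sum_n a n <= sum_n a (S n))
    by (intros n; rewrite sum_Sn; change (plus ?x ?y) with (x + y); pose proof (Ha (S n)); lra).
  destruct (ex_finite_lim_seq_incr _ _ Hincr HM) as [s Hs].
  exists s; split; [exact Hs |].
  exact (is_lim_seq_le _ _ _ _ HM Hs (is_lim_seq_const M)).
Qed.

Section Integrand.

Variable alpha : R.

Lemma lemma3_integrand_gt_0 (y : R) : 0 < lemma3_integrand alpha y.
Proof.
  apply Rinv_0_lt_compat; pose proof (Rpower_gt_0 y alpha); lra.
Qed.

Lemma lemma3_integrand_le_1 (y : R) : lemma3_integrand alpha y <= 1.
Proof.
  rewrite <- Rinv_1; apply Rinv_le_contravar; [lra |].
  pose proof (Rpower_gt_0 y alpha); lra.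
Qed.

Lemma lemma3_integrand_le_Rpower (y : R) : lemma3_integrand alpha y <= Rpower y (- alpha).
Proof.
  rewrite Rpower_Ropp; apply Rinv_le_contravar; [apply Rpower_gt_0 | lra].
Qed.

Lemma lemma3_integrand_decr (x y : R) :
  0 <= alpha -> 0 < x -> x <= y -> lemma3_integrand alpha y <= lemma3_integrand alpha x.
Proof.
  intros Ha Hx Hxy; apply Rinv_le_contravar.
  - pose proof (Rpower_gt_0 x alpha); lra.
  - apply Rplus_le_compat_l, Rle_Rpower_l; lra.
Qed.

Lemma continuous_lemma3_integrand (y : R) : 0 < y -> continuous (lemma3_integrand alpha) y.
Proof.
  intros Hy; unfold lemma3_integrand, Rpower.
  apply (ex_derive_continuous (K := R_AbsRing) (V := R_NormedModule)); auto_derive.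
  pose proof (exp_pos (alpha * ln y)); repeat split; lra.
Qed.

Lemma ex_RInt_lemma3_integrand (a b : R) :
  0 < a -> 0 < b -> ex_RInt (lemma3_integrand alpha) a b.
Proof.
  intros Ha Hb; apply (ex_RInt_continuous (V := R_CompleteNormedModule)).
  intros z Hz; apply continuous_lemma3_integrand.
  pose proof (Rmin_glb_lt a b 0 Ha Hb); lra.
Qed.

Lemma RInt_lemma3_integrand_le (a b : R) :
  1 < alpha -> 0 < a -> a <= b -> RInt (lemma3_integrand alpha) a b <= 1 + 1 / (alpha - 1).
Proof.
  intros Ha Ha0 Hab.
  set (a' := Rmin a 1); set (b' := Rmax b 1).
  assert (Ha' : 0 < a' <= 1) by (split; [apply Rmin_glb_lt; lra | apply Rmin_r]).
  assert (Hb' : 1 <= b') by apply Rmax_r.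
  apply Rle_trans with (RInt (lemma3_integrand alpha) a' b').
  { apply RInt_le_superinterval;
      [exact ex_RInt_lemma3_integrand | intros; left; apply lemma3_integrand_gt_0
      | lra | apply Rmin_l | exact Hab | apply Rmax_l]. }
  rewrite <- (RInt_Chasles _ a' 1 b') by (apply ex_RInt_lemma3_integrand; lra).
  change (plus ?x ?y) with (x + y).
  assert (H01 : RInt (lemma3_integrand alpha) a' 1 <= (1 - a') * 1).
  { apply RInt_le_const; [lra | apply ex_RInt_lemma3_integrand; lra |].
    intros; apply lemma3_integrand_le_1. }
  assert (Htail := is_RInt_Rpower (- alpha) 1 b' ltac:(lra) ltac:(lra) ltac:(lra)).
  assert (H1b : RInt (lemma3_integrand alpha) 1 b' <= RInt (fun y => Rpower y (- alpha)) 1 b').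
  { apply RInt_le; [lra | apply ex_RInt_lemma3_integrand; lra | eexists; exact Htail |].
    intros; apply lemma3_integrand_le_Rpower. }
  rewrite (is_RInt_unique _ _ _ _ Htail), Rpower_1_l in H1b.
  assert (Hdiv : (Rpower b' (- alpha + 1) - 1) / (- alpha + 1) <= 1 / (alpha - 1)).
  { replace ((Rpower b' (- alpha + 1) - 1) / (- alpha + 1))
      with (1 / (alpha - 1) - Rpower b' (- alpha + 1) / (alpha - 1)) by (field; lra).
    assert (Hal : 0 < alpha - 1) by lra.
    pose proof (Rdiv_lt_0_compat _ _ (Rpower_gt_0 b' (- alpha + 1)) Hal).
    lra. }
  lra.
Qed.

End Integrand.

Theorem lemma3 (lambda alpha beta gamma : R)
  (Hl : 0 < lambda) (Hab : alpha <= beta) (Ha : 1 < alpha)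
  (Hg : alpha / beta <= gamma) :
  exists I : R,
    is_RInt_gen (lemma3_integrand alpha) (at_right 0) (Rbar_locally p_infty) I /\
    exists s : R,
      is_series (fun n : nat => lemma3_term alpha beta gamma lambda (INR (S n))) s /\
      s <= Rpower lambda (- ((1 + beta * gamma - alpha) / beta))
           * Rpower 2 (1 - alpha / beta) * I.
Proof.
  set (h := lemma3_integrand alpha).
  destruct (is_RInt_gen_of_RInt_bounded h (ex_RInt_lemma3_integrand alpha)
              (fun y _ => Rlt_le _ _ (lemma3_integrand_gt_0 alpha y)) (1 + 1 / (alpha - 1))
              (fun a b => RInt_lemma3_integrand_le alpha a b Ha)) as [I [HI HIub]].
  exists I; split; [exact HI |].
  set (K := Rpower lambda (- ((1 + beta * gamma - alpha) / beta)) * Rpower 2 (1 - alpha / beta)).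
  set (c := Rpower lambda (1 / beta)).
  assert (HK : 0 < K) by (apply Rmult_lt_0_compat; apply Rpower_gt_0).
  assert (Hc : 0 < c) by apply Rpower_gt_0.
  set (g := fun x => K * c * h (c * x)).
  assert (Hg_RInt : forall a b, 0 < a -> 0 < b -> is_RInt g a b (K * RInt h (c * a) (c * b))).
  { intros a b Ha0 Hb0; apply is_RInt_scal_comp_mul, ex_RInt_lemma3_integrand; nra. }
  apply is_series_of_bounded_sum_n.
  { intros n; left; apply Rdiv_lt_0_compat; apply Rpower_gt_0. }
  intros N; apply Rle_trans with (sum_n (fun n => g (INR (S n))) N).
  { apply sum_n_m_le; intros n; apply lemma3_term_le; try lra; apply lt_0_INR, Nat.lt_0_succ. }
  apply sum_n_le_of_RInt_le.
  - intros a b Ha0 Hb0; eexists; apply Hg_RInt; assumption.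
  - intros x y Hx Hxy; apply Rmult_le_compat_l; [nra |].
    apply lemma3_integrand_decr; nra.
  - intros a b Ha0 Hab0.
    rewrite (is_RInt_unique _ _ _ _ (Hg_RInt a b Ha0 ltac:(lra))).
    apply Rmult_le_compat_l; [lra | apply HIub; nra].
Qed.
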